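(* Let $1 \leqslant k \leqslant n$ be integers. Let $\mathcal{C}$ be the set of all chains in $\{0,1\}^n$ of length exactly $k+1$, together with all symmetric chains in $\{0,1\}^n$ of length less than $k+1$ (chains, length and symmetry as defined in the context). Suppose there exist strictly positive real weights $w_\gamma > 0$, one for each $\gamma \in \mathcal{C}$, such that for every $x \in \{0,1\}^n$ $$\sum_{\gamma \in \mathcal{C} :\, x \in \gamma} w_\gamma = 1.$$ Call $A \subseteq \{0,1\}^n$ admissible if there are no two distinct $x, y \in A$ with $x_i \leqslant y_i$ for all $i$ and $x_i < y_i$ for at most $k$ coordinates $i$. Then: if $n$ is even, the set $B = \{x \in \{0,1\}^n : |x| \equiv \tfrac{n}{2} \pmod{k+1}\}$ is the unique admissible set of maximum cardinality; if $n$ is odd, the sets $B_1 = \{x : |x| \equiv \lfloor \tfrac{n}{2} \rfloor \pmod{k+1}\}$ and $B_2 = \{x : |x| \equiv \lceil \tfrac{n}{2} \rceil \pmod{k+1}\}$ are admissible sets of maximum cardinality and are the only ones.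
   Context: For $x \in \{0,1\}^n$, $|x|$ denotes the number of coordinates equal to $1$, and the layer $L_m$ is $\{x : |x| = m\}$. For $x, y \in \{0,1\}^n$ write $x \prec y$ if there is a coordinate $j$ with $x_i = y_i$ for all $i \neq j$, $x_j = 0$ and $y_j = 1$. A chain is an ordered tuple $(x_1, \dots, x_l)$ of elements of $\{0,1\}^n$ with $x_1 \prec x_2 \prec \dots \prec x_l$ (a single element is a chain); its length is $l$. If $x_1 \in L_m$ then $x_l \in L_{m+l-1}$, and the chain is called symmetric if $\frac{m + (m+l-1)}{2} = \frac{n}{2}$. Writing $x \in \gamma$ means $x$ is one of the entries of the chain $\gamma$. *)

From mathcomp Require Import all_boot all_order all_algebra.
From mathcomp Require Import reals.
Set Implicit Arguments. Unset Strict Implicit. Unset Printing Implicit Defensive.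

(* The cube {0,1}^n: x : 'I_n -> bool, x i = true meaning coordinate i is 1. *)
Definition cube (n : nat) := {ffun 'I_n -> bool}.

Definition wt n (x : cube n) : nat := #|[pred i | x i]|.

Definition prec n (x y : cube n) : bool :=
  [exists j, [&& ~~ x j, y j & [forall i, (i != j) ==> (x i == y i)]]].

(* A chain is a nonempty tuple (x_1,...,x_l) with x_1 ≺ x_2 ≺ ... ≺ x_l;
   its length is the size of the sequence. *)
Definition is_chain n (s : seq (cube n)) : bool :=
  (0 < size s) && sorted (@prec n) s.

(* symmetric: x_1 ∈ L_m, length l, and (m + (m+l-1))/2 = n/2,
   i.e. 2m + l - 1 = n. *)
Definition sym_chain n (s : seq (cube n)) : bool :=
  if s is x :: _ then (wt x).*2 + (size s).-1 == n else false.

Definition inC n k (s : seq (cube n)) : bool :=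
  is_chain s && ((size s == k.+1) || ((size s < k.+1) && sym_chain s)).

Definition Cseq n k : seq (seq (cube n)) :=
  [seq s <- flatten [seq [seq tval t | t : l.-tuple (cube n)] | l <- iota 1 k.+1]
     | inC k s].

Definition close_below n k (x y : cube n) : bool :=
  [forall i, x i <= y i] && (#|[pred i | x i < y i]| <= k).

Definition admissible n k (A : {set cube n}) : bool :=
  [forall x in A, forall y in A, (x != y) ==> ~~ close_below k x y].

Definition layerset n k (r : nat) : {set cube n} :=
  [set x | wt x == r %[mod k.+1]].

From mathcomp Require Import all_boot all_order all_algebra.
From mathcomp Require Import reals zify.
Set Implicit Arguments. Unset Strict Implicit. Unset Printing Implicit Defensive.
Import Order.TTheory GRing.Theory Num.Theory.

(* Counting incidences between points and the chains of C weighted by w gives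
   |A| = sum_g w_g |A ∩ g| for every A.  An admissible set meets each chain of C
   at most once, so |A| <= sum_g w_g, with equality for the layer sets through
   the middle level, which meet every chain of C exactly once; as the weights are
   positive, a maximum admissible set also meets every chain of C exactly once.
   Then along any maximal chain of the cube each k+1 consecutive levels contain
   exactly one point of A, so membership is (k+1)-periodic in the level.
   Transposing two adjacent coordinates of a maximal chain changes it at a single
   level, where a window of k+1 levels forces the same membership; hence the
   pattern is the same for all maximal chains and A = {x : |x| = t0 mod k+1}.
   The middle symmetric chain of length 1 (n even) or 2 (n odd) determines t0. *)

Lemma count_window_periodic (g : pred nat) n k : (k <= n)%N ->
  (forall a, (a + k <= n)%N -> count g (iota a k.+1) = 1) ->
  exists t0, forall t, (t <= n)%N -> g t = (t %% k.+1 == t0).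
Proof.
move=> k_le_n window.
have g_shift a : (a + k.+1 <= n)%N -> g (a + k.+1) = g a.
  move=> ak_le_n; have := congr1 (count g) (iotaD a k.+1 1); rewrite addn1.
  change (iota a k.+2) with ([:: a] ++ iota a.+1 k.+1).
  by rewrite !count_cat !window /=; lia.
have g_periodic q r : (q * k.+1 + r <= n)%N -> g (q * k.+1 + r) = g r.
  elim: q => [|q IH] qr_le_n; first by rewrite mul0n.
  have -> : q.+1 * k.+1 + r = q * k.+1 + r + k.+1 by rewrite mulSn; lia.
  by rewrite g_shift ?IH //; move: qr_le_n; rewrite mulSn; lia.
have := window 0 k_le_n; rewrite -size_filter.
case first_hit: (filter g (iota 0 k.+1)) => [|t0 []] // _; exists t0 => t t_le_n.
rewrite {1}(divn_eq t k.+1) g_periodic -?divn_eq //.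
have : (t %% k.+1 \in iota 0 k.+1) by rewrite mem_iota ltn_pmod.
by rewrite -mem_seq1 -first_hit mem_filter => ->; rewrite andbT.
Qed.

Lemma count_iota_modn k r m :
  count (fun t => t %% k.+1 == r %% k.+1) (iota m k.+1) = 1.
Proof.
elim: m => [|m IH].
  rewrite (@eq_in_count _ _ (pred1 (r %% k.+1))) => [|t].
    by rewrite count_uniq_mem ?iota_uniq // mem_iota ltn_pmod.
  by rewrite mem_iota => /andP[_ tk]; rewrite /= modn_small.
have := congr1 (count (fun t => t %% k.+1 == r %% k.+1)) (iotaD m k.+1 1).
rewrite addn1; change (iota m k.+2) with ([:: m] ++ iota m.+1 k.+1).
by rewrite !count_cat IH /= modnDr; lia.
Qed.

Lemma count_iota_modn_short k r m l : (l <= k.+1)%N -> (m <= r < m + l)%N ->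
  count (fun t => t %% k.+1 == r %% k.+1) (iota m l) = 1.
Proof.
move=> lk rml; apply/eqP; rewrite eqn_leq -has_count andbC.
apply/andP; split; first by apply/hasP; exists r; rewrite ?mem_iota.
rewrite -(count_iota_modn k r m) -(subnKC lk) iotaD count_cat; exact: leq_addr.
Qed.

Lemma count_eq_off_point (T : eqType) (f g : pred T) s u : uniq s -> u \in s ->
  {in s, forall t, t != u -> f t = g t} -> count f s = count g s -> f u = g u.
Proof.
move=> s_uniq us fg; rewrite !(permP (perm_to_rem us)) /=.
rewrite (@eq_in_count _ f g (rem u s)) => [|t]; first by lia.
by rewrite (mem_rem_uniq _ s_uniq) => /andP[t_ne_u ts]; apply: fg.
Qed.

Section WeightedCover.
Local Open Scope ring_scope.
Variables (T : finType) (R : numDomainType) (C : seq (seq T)) (w : seq T -> R).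
Hypothesis C_uniq : {in C, forall g, uniq g}.
Hypothesis w_gt0 : {in C, forall g, 0 < w g}.
Hypothesis w_cover : forall x, \sum_(g <- C | x \in g) w g = 1.

Lemma card_weighted_cover (A : {set T}) :
  #|A|%:R = \sum_(g <- C) w g *+ count (mem A) g.
Proof.
have -> : #|A|%:R = \sum_(x in A) \sum_(g <- C | x \in g) w g :> R.
  by rewrite -sumr_const; apply: eq_bigr => x _; rewrite w_cover.
rewrite (exchange_big_dep xpredT) //=; apply: eq_big_seq => g /C_uniq ug.
have card_inA : #|[predI A & g]| = count (mem A) g.
  rewrite -size_filter -(card_uniqP (filter_uniq _ ug)).
  by apply: eq_card => x; rewrite !inE mem_filter.
by rewrite -card_inA -sumr_const.
Qed.

Lemma card_le_weighted_cover (A : {set T}) :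
  {in C, forall g, (count (mem A) g <= 1)%N} -> #|A|%:R <= \sum_(g <- C) w g.
Proof.
move=> A1; rewrite card_weighted_cover big_seq [leRHS]big_seq.
apply: ler_sum => g gC; have := A1 g gC.
by case: (count _ _) => [|[|]] // _; rewrite ?mulr0n ?mulr1n // ltW ?w_gt0.
Qed.

Lemma card_eq_weighted_cover (A : {set T}) :
  {in C, forall g, count (mem A) g = 1%N} -> #|A|%:R = \sum_(g <- C) w g.
Proof.
move=> A1; rewrite card_weighted_cover big_seq [RHS]big_seq.
by apply: eq_bigr => g gC; rewrite A1.
Qed.

Lemma weighted_cover_tight (A : {set T}) :
  {in C, forall g, (count (mem A) g <= 1)%N} ->
  \sum_(g <- C) w g <= #|A|%:R -> {in C, forall g, count (mem A) g = 1%N}.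
Proof.
move=> A1 ge_card.
pose defect g := w g *+ (1 - count (mem A) g).
have defect_ge0 g : g \in C -> 0 <= defect g by move=> gC; rewrite mulrn_wge0 ?ltW ?w_gt0.
have sum_defect : \sum_(g <- C) defect g = \sum_(g <- C) w g - #|A|%:R.
  rewrite card_weighted_cover -sumrB !big_seq; apply: eq_bigr => g gC.
  by have := A1 g gC; rewrite /defect; case: (count _ _) => [|[|]] //= _; rewrite ?subr0 ?subrr.
have : \sum_(g <- C | g \in C) defect g == 0.
  by rewrite -big_seq sum_defect eq_le subr_le0 ge_card subr_ge0 card_le_weighted_cover.
rewrite psumr_eq0 // => /allP defect0 g gC.
have := defect0 g gC; rewrite gC /= mulrn_eq0 (gt_eqF (w_gt0 gC)) orbF.
by have := A1 g gC; case: (count _ _) => [|[|]].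
Qed.

End WeightedCover.

Section Cube.
Variable n : nat.
Implicit Types (x y z : cube n) (s : seq (cube n)).

Definition cube_le x y := [forall i, x i <= y i].

Lemma wt_le_dim x : (wt x <= n)%N.
Proof. by apply: leq_trans (max_card _) _; rewrite card_ord. Qed.

Lemma wt_prec x y : prec x y -> wt y = (wt x).+1.
Proof.
case/existsP=> j /and3P[xj yj /forallP xy_off_j].
rewrite /wt (cardD1 j) (cardD1 j [pred i | x i]) !inE (negbTE xj) yj /=.
congr _.+1; apply: eq_card => i; rewrite !inE.
by case: eqP => //= /eqP ij; have /implyP/(_ ij)/eqP-> := xy_off_j i.
Qed.

Lemma cube_le_prec x y : prec x y -> cube_le x y.
Proof.
case/existsP=> j /and3P[xj yj /forallP xy_off_j]; apply/forallP => i.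
have [->|ij] := eqVneq i j; first by rewrite yj leq_b1.
by have /implyP/(_ ij)/eqP-> := xy_off_j i.
Qed.

Lemma cube_le_trans y x z : cube_le x y -> cube_le y z -> cube_le x z.
Proof.
by move=> /forallP xy /forallP yz; apply/forallP => i; apply: leq_trans (xy i) (yz i).
Qed.

Lemma wt_cube_le x y : cube_le x y -> wt y = wt x + #|[pred i | x i < y i]|.
Proof.
move=> /forallP xy; rewrite /wt -(cardID [pred i | x i] [pred i | y i]).
congr (_ + _); apply: eq_card => i; rewrite !inE.
  by have := xy i; case: (x i); case: (y i).
by have := xy i; case: (x i); case: (y i).
Qed.

Lemma cube_le_wt_eq x y : cube_le x y -> wt x = wt y -> x = y.
Proof.
move=> xy; rewrite (wt_cube_le xy) -{1}[wt x]addn0 => /addnI /esym/card0_eq x_nlt_y.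
apply/ffunP => i; have := x_nlt_y i; move/forallP: xy => /(_ i).
by rewrite !inE; case: (x i); case: (y i).
Qed.

Lemma sorted_prec_wt x s : sorted (@prec n) (x :: s) ->
  map (@wt n) (x :: s) = iota (wt x) (size s).+1.
Proof.
elim: s x => [|y s IH] x //= /andP[xy ys].
by have /= -> := IH y ys; rewrite (wt_prec xy).
Qed.

Lemma sorted_prec_uniq s : sorted (@prec n) s -> uniq s.
Proof.
case: s => [|x s] // xs; apply: (@map_uniq _ _ (@wt n)).
by rewrite (sorted_prec_wt xs) iota_uniq.
Qed.

Lemma sorted_prec_head_le x s y : sorted (@prec n) (x :: s) -> y \in s -> cube_le x y.
Proof.
elim: s x => [|z s IH] x //= /andP[xz zs]; rewrite inE => /predU1P[->|ys].
  exact: cube_le_prec.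
exact: cube_le_trans (cube_le_prec xz) (IH z zs ys).
Qed.

Lemma sorted_prec_close_below k x s y : sorted (@prec n) (x :: s) ->
  (size s <= k)%N -> y \in s -> close_below k x y.
Proof.
move=> xs sk ys; have xy := sorted_prec_head_le xs ys.
rewrite /close_below -/(cube_le x y) xy /=.
have : wt y \in map (@wt n) (x :: s) by rewrite map_f // inE ys orbT.
rewrite (sorted_prec_wt xs) mem_iota (wt_cube_le xy) => /andP[_].
by rewrite ltn_add2l ltnS => /leq_trans; apply.
Qed.

End Cube.

(* [m, m + l) is the range of levels of a symmetric chain of length l. *)
Definition central_level n r :=
  forall m l, (0 < l)%N -> m.*2 + l.-1 = n -> (m <= r < m + l)%N.

Lemma central_level_half n : central_level n n./2.
Proof. by move=> m l l_gt0 sym; have := odd_double_half n; lia. Qed.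

Lemma central_level_uphalf n : odd n -> central_level n (uphalf n).
Proof.
by move=> odd_n m l l_gt0 sym; have := odd_double_half n; rewrite uphalf_half odd_n; lia.
Qed.

Section ChainFamily.
Variables n k : nat.
Implicit Types (A : {set cube n}) (g : seq (cube n)).

Lemma inC_size g : inC k g -> (size g <= k.+1)%N.
Proof. by case/andP=> _ /orP[/eqP->|/andP[/ltnW]]. Qed.

Lemma mem_Cseq g : (g \in Cseq n k) = inC k g.
Proof.
rewrite mem_filter andb_idr // => /[dup] /andP[/andP[g_gt0 _] _] gC.
apply/flattenP; exists [seq tval t | t : (size g).-tuple (cube n)].
  by apply/mapP; exists (size g); rewrite // mem_iota g_gt0 add1n ltnS inC_size.
by apply/mapP; exists (in_tuple g); rewrite ?mem_enum.
Qed.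

Lemma Cseq_uniq : {in Cseq n k, forall g, uniq g}.
Proof. by move=> g; rewrite mem_Cseq => /andP[/andP[_ /sorted_prec_uniq]]. Qed.

Lemma admissible_close_below A x y : admissible k A ->
  x \in A -> y \in A -> x != y -> ~~ close_below k x y.
Proof. by move=> /forallP/(_ x)/implyP adm /adm/forall_inP/(_ y) yA /yA/implyP. Qed.

Lemma admissible_count_le1 A g : admissible k A -> inC k g ->
  (count (mem A) g <= 1)%N.
Proof.
move=> admA gC; have := inC_size gC; case/andP: gC => /andP[_ sg] _.
elim: g sg => [|x s IH] //= xs size_xs.
case xA: (x \in A); last exact: IH (path_sorted xs) (ltnW size_xs).
rewrite /= ltnS leqn0 eqn0Ngt -has_count; apply/hasPn => y ys; apply/negP => yA.
have /andP[x_notin_s _] := sorted_prec_uniq (xs : sorted _ (x :: s)).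
have x_neq_y : x != y by apply: contraNneq x_notin_s => ->.
apply: (negP (admissible_close_below admA xA yA x_neq_y)).
exact: sorted_prec_close_below xs _ ys.
Qed.

Lemma layerset_count r g : central_level n r -> inC k g ->
  count (mem (layerset n k r)) g = 1.
Proof.
case: g => [|x s] // central /andP[/andP[_ xs] size_xs].
have -> : count (mem (layerset n k r)) (x :: s) =
          count (fun t => t %% k.+1 == r %% k.+1) (map (@wt n) (x :: s)).
  by rewrite count_map; apply: eq_count => y; rewrite /= inE.
rewrite (sorted_prec_wt xs); case/orP: size_xs => [/eqP[<-]|/andP[lt_k sym]].
  exact: count_iota_modn.
apply: count_iota_modn_short; first exact: ltnW.
by apply: central => //; apply/eqP.
Qed.

Lemma layerset_admissible r : admissible k (layerset n k r).
Proof.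
apply/forall_inP => x; rewrite inE => /eqP xr.
apply/forall_inP => y; rewrite inE => /eqP yr.
apply/implyP; apply: contra_neqN => /andP[xy lt_k]; apply: (cube_le_wt_eq xy).
move: xr yr; rewrite (wt_cube_le xy) => <- /eqP.
rewrite -{2}[wt x]addn0 eqn_modDl mod0n modn_small ?ltnS // => /eqP ->.
by rewrite addn0.
Qed.

End ChainFamily.

Section FullOrders.
Variable n : nat.
Implicit Types (o : seq 'I_n) (x : cube n).

Definition full_order o := perm_eq o (enum 'I_n).

(* Coordinate orders o encode the maximal chains of the cube; [prefix_pt o t]
   is the point of level t of that chain. *)
Definition prefix_pt o t : cube n := [ffun i => i \in take t o].

Lemma full_order_enum : full_order (enum 'I_n).
Proof. exact: perm_refl. Qed.

Lemma size_full_order o : full_order o -> size o = n.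
Proof. by move/perm_size->; rewrite size_enum_ord. Qed.

Lemma uniq_full_order o : full_order o -> uniq o.
Proof. by move/perm_uniq->; apply: enum_uniq. Qed.

Lemma wt_prefix_pt o t : full_order o -> (t <= n)%N -> wt (prefix_pt o t) = t.
Proof.
move=> o_full t_le_n; rewrite /wt (@eq_card _ _ (mem (take t o))) => [|i]; last first.
  by rewrite !inE ffunE.
rewrite (card_uniqP _) ?take_uniq ?uniq_full_order // size_take size_full_order //.
by case: ltnP => //; lia.
Qed.

Lemma prec_prefix_pt o t : full_order o -> (t < n)%N ->
  prec (prefix_pt o t) (prefix_pt o t.+1).
Proof.
move=> o_full t_lt_n; have t_lt_o : (t < size o)%N by rewrite size_full_order.
set i0 := Ordinal t_lt_n; have take_succ := take_nth i0 t_lt_o.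
have : uniq (take t.+1 o) by rewrite take_uniq ?uniq_full_order.
rewrite take_succ rcons_uniq => /andP[new_i _].
apply/existsP; exists (nth i0 o t); rewrite !ffunE take_succ mem_rcons inE eqxx new_i /=.
by apply/forall_inP => i ne_i; rewrite !ffunE take_succ mem_rcons inE (negbTE ne_i).
Qed.

Lemma path_prefix_pt o a l : full_order o -> (a + l <= n)%N ->
  path (@prec n) (prefix_pt o a) (map (prefix_pt o) (iota a.+1 l)).
Proof.
move=> o_full; elim: l a => [|l IH] a al_le_n //=.
by rewrite prec_prefix_pt ?IH //; lia.
Qed.

Lemma prefix_pt_swap p i j q t : t != (size p).+1 ->
  prefix_pt (p ++ i :: j :: q) t = prefix_pt (p ++ j :: i :: q) t.
Proof.
move=> ne_t; apply/ffunP => a; rewrite !ffunE !take_cat; case: ltnP => // p_le_t.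
have : t - size p != 1 by lia.
case: (t - size p) => [|[|d]] //= _; rewrite !mem_cat !in_cons.
by rewrite [(a == i) || _]orbCA.
Qed.

Lemma full_order_swap p i j q :
  full_order (p ++ i :: j :: q) -> full_order (p ++ j :: i :: q).
Proof. by apply: perm_trans; rewrite perm_cat2l (perm_catCA [:: j] [:: i]). Qed.

Lemma exists_full_order x : exists2 o, full_order o & prefix_pt o (wt x) = x.
Proof.
pose o := enum [pred i | x i] ++ enum [pred i | ~~ x i].
have size_ones : size (enum [pred i | x i]) = wt x by rewrite -cardE.
exists o; last by apply/ffunP => i; rewrite ffunE take_size_cat // mem_enum.
apply: uniq_perm; rewrite ?enum_uniq //; last first.
  by move=> i; rewrite mem_cat !mem_enum !inE orbN.
rewrite cat_uniq !enum_uniq andbT /=; apply/hasPn => i.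
by rewrite !mem_enum !inE => ->.
Qed.

End FullOrders.

Section Transversal.
Variables (n k : nat) (A : {set cube n}).
Hypotheses (k_gt0 : (0 < k)%N) (k_le_n : (k <= n)%N).
Hypothesis A_transversal : forall g, inC k g -> count (mem A) g = 1.

Definition hits (o : seq 'I_n) : pred nat := fun t => prefix_pt o t \in A.

Lemma count_hits_window o : full_order o ->
  forall a, (a + k <= n)%N -> count (hits o) (iota a k.+1) = 1.
Proof.
move=> o_full a ak_le_n; rewrite -(A_transversal (g := map (prefix_pt o) (iota a k.+1))).
  by rewrite count_map.
by rewrite /inC /is_chain size_map size_iota eqxx /= path_prefix_pt.
Qed.

Lemma count_hits_middle o : full_order o -> count (hits o) (iota n./2 (odd n).+1) = 1.
Proof.
move=> o_full; have n_halves := odd_double_half n.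
rewrite -(A_transversal (g := map (prefix_pt o) (iota n./2 (odd n).+1))).
  by rewrite count_map.
rewrite /inC /is_chain size_map size_iota /= path_prefix_pt //; last by lia.
have half_le_n : (n./2 <= n)%N by lia.
rewrite /sym_chain /= size_map size_iota wt_prefix_pt // addnC n_halves eqxx andbT.
by rewrite -leq_eqVlt ltnS; case: (odd n).
Qed.

Lemma hits_eq_off_level o o' u : full_order o -> full_order o' -> (u <= n)%N ->
  (forall t, t != u -> hits o t = hits o' t) -> hits o u = hits o' u.
Proof.
move=> o_full o'_full u_le_n hits_off_u.
apply: (@count_eq_off_point _ _ _ (iota (u - k) k.+1)).
- exact: iota_uniq.
- by rewrite mem_iota; lia.
- by move=> t _; apply: hits_off_u.
- by rewrite !count_hits_window //; lia.
Qed.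

Lemma hits_swap p i j q : full_order (p ++ i :: j :: q) ->
  hits (p ++ i :: j :: q) =1 hits (p ++ j :: i :: q).
Proof.
move=> o_full t; have [->|ne_t] := eqVneq t (size p).+1; last by rewrite /hits prefix_pt_swap.
have u_le_n : ((size p).+1 <= n)%N.
  by rewrite -[X in (_ <= X)%N](size_full_order o_full) size_cat -addn1 leq_add2l.
apply: (hits_eq_off_level o_full (full_order_swap o_full) u_le_n) => t' ne_t'.
by rewrite /hits prefix_pt_swap.
Qed.

Lemma hits_front p s a q : full_order (p ++ s ++ a :: q) ->
  hits (p ++ s ++ a :: q) =1 hits (p ++ a :: s ++ q).
Proof.
elim: s p => [|c s IH] p o_full //.
have o'_full : full_order (p ++ c :: a :: s ++ q).
  by apply: perm_trans _ o_full; rewrite perm_cat2l perm_cons perm_sym (perm_catCA s [:: a] q).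
apply: ftrans (_ : _ =1 hits (p ++ c :: a :: s ++ q)) (hits_swap o'_full).
by have := IH (rcons p c); rewrite !cat_rcons; apply.
Qed.

Lemma hits_perm p o1 o2 : full_order (p ++ o1) -> perm_eq o1 o2 ->
  hits (p ++ o1) =1 hits (p ++ o2).
Proof.
elim: o1 p o2 => [|a o1 IH] p o2 o_full o12.
  by have := perm_size o12; case: o2 {o12}.
have a_in_o2 : a \in o2 by rewrite -(perm_mem o12) mem_head.
move: o12; case/splitPr: a_in_o2 => s r.
rewrite perm_sym -[a :: r]cat1s perm_catCA /= perm_cons perm_sym => o12.
apply: ftrans (_ : _ =1 hits (p ++ a :: s ++ r)) _.
  by have := IH (rcons p a) _ _ o12; rewrite !cat_rcons; apply.
apply: fsym; apply: hits_front.
by apply: perm_trans o_full; rewrite perm_cat2l -cat1s perm_catCA /= perm_cons perm_sym.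
Qed.

Lemma transversal_wt_modn : exists t0, forall x, (x \in A) = (wt x %% k.+1 == t0).
Proof.
have hits_enum o : full_order o -> hits o =1 hits (enum 'I_n).
  by move=> o_full; apply: (hits_perm (p := [::])).
have [t0 hits_t0] := count_window_periodic k_le_n (count_hits_window (full_order_enum n)).
exists t0 => x; have [o o_full ox] := exists_full_order x.
by rewrite -{1}ox -/(hits o (wt x)) hits_enum // hits_t0 // wt_le_dim.
Qed.

Lemma transversal_layerset : if ~~ odd n then A = layerset n k n./2
  else A = layerset n k n./2 \/ A = layerset n k (uphalf n).
Proof.
have [t0 memA] := transversal_wt_modn.
have A_layer r : hits (enum 'I_n) r -> (r <= n)%N -> A = layerset n k r.
  move=> hit_r r_le_n; apply/setP => x; rewrite memA inE.
  by move: hit_r; rewrite /hits memA wt_prefix_pt ?full_order_enum // => /eqP->.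
rewrite uphalf_half; have := count_hits_middle (full_order_enum n).
have := odd_double_half n; case: (odd n) => /= n_halves.
  case hit_mid: (hits _ n./2) => /=.
    by left; apply: A_layer => //; lia.
  rewrite addn0 => /eqP; rewrite eqb1 add1n => hit_next.
  by right; apply: A_layer => //; lia.
rewrite addn0 => /eqP; rewrite eqb1 => hit_mid.
by apply: A_layer => //; lia.
Qed.

End Transversal.

Section MaximumAdmissible.
Local Open Scope ring_scope.
Variables (R : numDomainType) (n k : nat) (w : seq (cube n) -> R).
Hypothesis w_gt0 : {in Cseq n k, forall g, 0 < w g}.
Hypothesis w_cover : forall x, \sum_(g <- Cseq n k | x \in g) w g = 1.

Lemma card_admissible_le (A : {set cube n}) : admissible k A ->
  #|A|%:R <= \sum_(g <- Cseq n k) w g.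
Proof.
move=> admA; apply: (card_le_weighted_cover (@Cseq_uniq n k) w_gt0 w_cover) => g.
by rewrite mem_Cseq; apply: admissible_count_le1.
Qed.

Lemma card_central_layerset r : central_level n r ->
  #|layerset n k r|%:R = \sum_(g <- Cseq n k) w g.
Proof.
move=> r_central; apply: (card_eq_weighted_cover (@Cseq_uniq n k) w_cover) => g.
by rewrite mem_Cseq; apply: layerset_count.
Qed.

Lemma central_layerset_max r : central_level n r ->
  admissible k (layerset n k r) /\
  forall A : {set cube n}, admissible k A -> (#|A| <= #|layerset n k r|)%N.
Proof.
move=> r_central; split=> [|A admA]; first exact: layerset_admissible.
by rewrite -(ler_nat R) card_central_layerset ?card_admissible_le.
Qed.

Lemma max_admissible_transversal (A : {set cube n}) : admissible k A ->
  (forall A' : {set cube n}, admissible k A' -> (#|A'| <= #|A|)%N) ->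
  forall g, inC k g -> count (mem A) g = 1%N.
Proof.
move=> admA A_max g; rewrite -mem_Cseq; move: g.
apply: (weighted_cover_tight (@Cseq_uniq n k) w_gt0 w_cover) => [g|].
  by rewrite mem_Cseq; apply: admissible_count_le1.
rewrite -(card_central_layerset (@central_level_half n)) ler_nat.
by rewrite A_max ?layerset_admissible.
Qed.

End MaximumAdmissible.

Local Open Scope ring_scope.

Theorem lemma3p4 (R : realType) (n k : nat) (hk1 : (1 <= k)%N) (hkn : (k <= n)%N)
  (w : seq (cube n) -> R)
  (hpos : forall g, g \in Cseq n k -> 0 < w g)
  (hcov : forall x : cube n, \sum_(g <- Cseq n k | x \in g) w g = 1) :
  forall A : {set cube n},
    (admissible k A /\
       forall A' : {set cube n}, admissible k A' -> (#|A'| <= #|A|)%N)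
    <->
    (if ~~ odd n then A = layerset n k n./2
     else A = layerset n k n./2 \/ A = layerset n k (uphalf n)).
Proof.
move=> A; split=> [[admA A_max]|].
  exact/transversal_layerset/(max_admissible_transversal hpos hcov admA A_max).
have layerset_max r := central_layerset_max hpos hcov (r := r).
case: ifP => [_ ->|/negbFE odd_n [->|->]]; apply: layerset_max.
- exact: central_level_half.
- exact: central_level_half.
- exact: central_level_uphalf.
Qed.
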